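(* Let $x$ be an infinite word over a finite alphabet and let $k,\lambda\in\mathbb{N}=\{1,2,3,\dots\}$ be such that $$\underline{d}(\mathrm{AP}(x,k,\lambda)) < \left(1+\left\lfloor\frac{k^2-k}{\lambda^2+\lambda}\right\rfloor\right)^{-1}.$$ Then there is a word $u$ with $|u|\le (k-1)\left\lfloor\frac{k^2-k}{\lambda^2+\lambda}\right\rfloor$ such that $u^\ell$ is a factor of $x$ for every $\ell>0$. In particular, $x$ is not $\omega$-power-free.
   Context: A factor is a contiguous subword; $|u|$ is the length of $u$ and $u^\ell$ is $\ell$ concatenated copies of $u$. A $(k,\lambda)$-anti-power is a word $w=w_1\cdots w_k$ with $|w_1|=\cdots=|w_k|$ such that $|\{i: w_i=w_j\}|\le\lambda$ for each $j\in\{1,\dots,k\}$. $\mathrm{AP}(x,k,\lambda)$ is the set of $m\in\mathbb{N}$ such that the prefix of $x$ of length $km$ is a $(k,\lambda)$-anti-power. The lower density of $S\subseteq\mathbb{N}$ is $\underline{d}(S)=\liminf_{n\to\infty}|S\cap\{1,\dots,n\}|/n$. A word is $\omega$-power-free if for every finite (nonempty) factor $u$ there exists $\ell\in\mathbb{N}$ such that $u^\ell$ is not a factor. *)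

From HB Require Import structures.
From mathcomp Require Import all_boot all_order all_algebra.
From mathcomp Require Import all_classical all_reals all_analysis.
Set Implicit Arguments. Unset Strict Implicit. Unset Printing Implicit Defensive.
Import Order.TTheory GRing.Theory Num.Theory.

(* An infinite word over the finite alphabet A is a map  x : nat -> A
   (position 0 is the first letter). Finite words are  seq A. *)

Definition prefix (A : Type) (x : nat -> A) (n : nat) : seq A := mkseq x n.

Definition is_factor (A : eqType) (u : seq A) (x : nat -> A) : Prop :=
  exists i : nat, u = mkseq (fun j => x (i + j)) (size u).

Definition wpow (A : Type) (u : seq A) (l : nat) : seq A := flatten (nseq l u).

(* (k,lam)-anti-power: w = w_1 ... w_k with |w_1| = ... = |w_k| (= m) such that
   for each j, #{ i : w_i = w_j } <= lam.  Blocks are indexed from 0. *)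
Definition anti_power (A : eqType) (k lam : nat) (w : seq A) : bool :=
  let m := size w %/ k in
  let blk (i : nat) := take m (drop (i * m) w) in
  [&& 0 < k, k %| size w &
      [forall j : 'I_k, #|[set i : 'I_k | blk i == blk j]| <= lam]].

Definition AP (A : eqType) (x : nat -> A) (k lam : nat) (m : nat) : bool :=
  (0 < m) && anti_power k lam (prefix x (k * m)).

(* |S cap {1..n}| / n, written for n+1 (n >= 0) so that the index starts at 1 *)
Definition density_seq (R : realType) (S : nat -> bool) (n : nat) : R :=
  (count S (iota 1 n.+1))%:R / (n.+1)%:R.

Definition lower_density (R : realType) (S : nat -> bool) : R :=
  limn_inf (density_seq R S).

Definition omega_power_free (A : eqType) (x : nat -> A) : Prop :=
  forall u : seq A, 0 < size u -> is_factor u x ->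
    exists l : nat, 0 < l /\ ~ is_factor (wpow u l) x.

(* Write N = (k^2 - k) / (lam^2 + lam).  Lower density below 1/(N+1) forces,
   arbitrarily far out, N+1 consecutive block lengths m, ..., m+N outside AP.
   At each of them some block of the prefix of length k m occurs more than lam
   times, which yields at least lam (lam+1) ordered pairs of distinct equal
   blocks; N+1 lengths give more than k (k-1) pairs in total, so a single pair
   of indices i < j has equal blocks at two lengths m1 < m2.  Reading block j
   through block i at both lengths shows that x has period (j-i)(m2-m1) <= (k-1)N
   on a window whose length grows with m.  Hence every power occurs for some
   word of length at most (k-1)N, and as there are finitely many such words,
   one word has all its powers as factors. *)

From Pilot Require Import Defs.
From HB Require Import structures.
From mathcomp Require Import all_boot all_order all_algebra.
From mathcomp Require Import all_classical all_reals all_analysis.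
From mathcomp Require Import zify lra.
Import Order.TTheory GRing.Theory Num.Theory.
Set Implicit Arguments. Unset Strict Implicit. Unset Printing Implicit Defensive.


Section Words.
Variable A : eqType.
Implicit Types (x : nat -> A) (u v : seq A).

Lemma wpowS u l : wpow u l.+1 = u ++ wpow u l.
Proof. by []. Qed.

Lemma wpowD u l l' : wpow u (l + l') = wpow u l ++ wpow u l'.
Proof. by rewrite /wpow nseqD flatten_cat. Qed.

Lemma size_wpow u l : size (wpow u l) = l * size u.
Proof. by elim: l => // l IH; rewrite wpowS size_cat IH mulSn. Qed.

Lemma nth_wpow a u l t : t < l * size u -> nth a (wpow u l) t = nth a u (t %% size u).
Proof.
elim: l t => // l IH t; rewrite mulSn wpowS nth_cat => ht.
have [tu|ut] := ltnP t (size u); first by rewrite modn_small.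
by rewrite IH -?(modnDr (t - size u)) ?subnK //; lia.
Qed.

Lemma is_factor_catl u v x : is_factor (u ++ v) x -> is_factor u x.
Proof.
case=> i e; exists i; rewrite -[LHS](take_size_cat v (erefl (size u))) e.
by rewrite /mkseq -map_take take_iota size_cat (minn_idPl (leq_addr _ _)).
Qed.

Lemma is_factor_wpow_le u l l' x :
  l' <= l -> is_factor (wpow u l) x -> is_factor (wpow u l') x.
Proof. by move=> /subnKC <-; rewrite wpowD; apply: is_factor_catl. Qed.

Lemma periodic_shift x y0 n q : 0 < q ->
  (forall y, y0 <= y < y0 + n -> x y = x (y + q)) ->
  forall t, t < n + q -> x (y0 + t) = x (y0 + t %% q).
Proof.
move=> q0 per t; elim: t {-2}t (leqnn t) => [|s IH] t.
  by rewrite leqn0 => /eqP -> _; rewrite mod0n.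
move=> ts tnq; have [tq|qt] := ltnP t q; first by rewrite modn_small.
rewrite -(subnK qt) modnDr -IH; [|lia|lia].
by rewrite addnA -per //; lia.
Qed.

Lemma is_factor_wpow_periodic x y0 n q l :
  0 < q -> l * q <= n + q -> (forall y, y0 <= y < y0 + n -> x y = x (y + q)) ->
  is_factor (wpow (mkseq (fun t => x (y0 + t)) q) l) x.
Proof.
move=> q0 lq per; exists y0.
apply: (@eq_from_nth _ (x 0)) => [|t]; rewrite !size_wpow !size_mkseq // => tlq.
rewrite nth_wpow ?size_mkseq // !nth_mkseq ?ltn_pmod //.
by symmetry; apply: (periodic_shift q0 per); lia.
Qed.

End Words.

Section Blocks.
Variables (A : eqType) (x : nat -> A).

Definition block (m i : nat) : seq A := mkseq (fun t => x (i * m + t)) m.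

Lemma prefix_block k m i :
  i < k -> take m (drop (i * m) (Defs.prefix x (k * m))) = block m i.
Proof.
move=> ik; rewrite /block /Defs.prefix /mkseq -map_drop -map_take drop_iota take_iota.
rewrite add0n (minn_idPl _); last by rewrite -mulnBl leq_pmull ?subn_gt0.
by rewrite -[X in iota X]addn0 iotaDl -map_comp.
Qed.

Lemma block_eq_nth m i j t : block m i = block m j -> t < m ->
  x (i * m + t) = x (j * m + t).
Proof. by move=> eq_ij tm; have := congr1 (nth (x 0) ^~ t) eq_ij; rewrite /= !nth_mkseq. Qed.

Lemma notAP_large_class k lam m : 0 < k -> 0 < m -> ~~ AP x k lam m ->
  exists j : 'I_k, lam < #|[set i : 'I_k | block m i == block m j]|.
Proof.
move=> k0 m0; rewrite /AP m0 /anti_power size_mkseq mulKn // k0 dvdn_mulr //=.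
case/forallPn => j; rewrite -ltnNge => large; exists j.
apply: (leq_trans large); apply/subset_leq_card/fintype.subsetP => i.
by rewrite !inE !prefix_block.
Qed.

Lemma twice_repeated_block_power m e i d l :
  0 < d -> 0 < e -> block m i = block m (i + d) ->
  block (m + e) i = block (m + e) (i + d) -> l * (d * e) + i * e <= m + d * e ->
  exists2 u : seq A, size u = d * e & is_factor (wpow u l) x.
Proof.
move=> d0 e0 eq1 eq2 long.
exists (mkseq (fun t => x ((i + d) * m + i * e + t)) (d * e)); first by rewrite size_mkseq.
apply: (is_factor_wpow_periodic (n := m - i * e)); [by rewrite muln_gt0 d0 | lia |].
move=> y /andP[y_ge y_lt]; rewrite -(subnKC y_ge); set s := y - _.
have s_lt : s < m - i * e by rewrite /s; lia.
have shift1 : x ((i + d) * m + i * e + s) = x (i * (m + e) + s).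
  by rewrite -addnA -(block_eq_nth eq1) ?mulnDr ?addnA //; lia.
rewrite shift1 (block_eq_nth eq2); last lia.
by congr x; rewrite !mulnDl !mulnDr; lia.
Qed.

End Blocks.

Section OrderedPairs.
Variable I : finType.

Definition offdiag (C : {set I}) : {set I * I} := [set p in finset.setX C C | p.1 != p.2].

Lemma card_offdiag C : #|offdiag C| = #|C| * #|C|.-1.
Proof.
have -> : offdiag C = finset.setX C C :\: [set (i, i) | i in C].
  apply/finset.setP => -[i j]; rewrite !inE /=.
  apply/andP/andP => [[/andP[iC jC] ij]|[ndiag /andP[iC jC]]].
    split; last by rewrite iC.
    by apply/imsetP => -[c _ [ei ej]]; rewrite ei ej eqxx in ij.
  split; first by rewrite iC.
  by apply: contra ndiag => /eqP <-; apply/imsetP; exists i.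
rewrite cardsD cardsX (finset.setIidPr _); last first.
  by apply/fintype.subsetP => _ /imsetP[i iC ->]; rewrite inE /= iC.
by rewrite card_imset => [|i j []]; rewrite // -subn1 mulnBr muln1.
Qed.

Definition eq_pairs (E : eqType) (b : I -> E) : {set I * I} :=
  [set p | (p.1 != p.2) && (b p.1 == b p.2)].

Lemma eq_pairs_sub (E : eqType) (b : I -> E) : eq_pairs b \subset offdiag [set: I].
Proof. by apply/fintype.subsetP => p; rewrite !inE => /andP[]. Qed.

Lemma card_eq_pairs_ge (E : eqType) (b : I -> E) j lam :
  lam < #|[set i | b i == b j]| -> lam * lam.+1 <= #|eq_pairs b|.
Proof.
set C := [set i | b i == b j] => large.
have sub : offdiag C \subset eq_pairs b.
  apply/fintype.subsetP => p; rewrite !inE => /andP[/andP[p1C p2C] ->].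
  by rewrite (eqP p1C) (eqP p2C) eqxx.
apply: leq_trans (subset_leq_card sub); rewrite card_offdiag mulnC.
by apply: leq_mul; lia.
Qed.

Lemma exists_meeting_sets (T : finType) (F : I -> {set T}) (O : {set T}) :
  (forall i, F i \subset O) -> #|O| < \sum_i #|F i| ->
  exists i j, i != j /\ ~~ [disjoint F i & F j].
Proof.
move=> FO; apply: contraPP => nmeet; apply/negP; rewrite -leqNgt.
have disjF i j : i != j -> [disjoint F i & F j].
  by move=> ij; apply/negPn/negP => meet; apply: nmeet; exists i, j.
have := partition_disjoint_bigcup addn (fun _ => 1) disjF.
rewrite /= sum1_card (eq_bigr (fun i => #|F i|)) => [<-|i _]; last exact: sum1_card.
apply: subset_leq_card; apply/bigcupsP => i _; exact: FO.
Qed.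

End OrderedPairs.

Lemma twice_repeated_block (A : eqType) (x : nat -> A) k lam N m :
  0 < k -> 0 < m -> k * k.-1 < N.+1 * (lam * lam.+1) ->
  (forall t, t <= N -> ~~ AP x k lam (m + t)) ->
  exists i j m1 m2, [/\ i < j < k, m <= m1 < m2, m2 <= m + N,
    block x m1 i = block x m1 j & block x m2 i = block x m2 j].
Proof.
move=> k0 m0 hk gap.
pose F (t : 'I_N.+1) := eq_pairs (fun i : 'I_k => block x (m + t) i).
have many : #|offdiag [set: 'I_k]| < \sum_t #|F t|.
  rewrite card_offdiag cardsT card_ord; apply: leq_trans hk _.
  rewrite -[N.+1 in X in X <= _]card_ord -sum_nat_const; apply: leq_sum => t _.
  have [j large] := notAP_large_class k0 (ltn_addr t m0) (gap t (ltn_ord t)).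
  exact: card_eq_pairs_ge large.
have [t1 [t2 [t12]]] := exists_meeting_sets (fun t => eq_pairs_sub _) many.
rewrite -finset.setI_eq0 => /finset.set0Pn[[a b]]; rewrite !inE /=.
case/andP => /andP[ab eq1] /andP[_ eq2].
wlog lt_t : t1 t2 t12 eq1 eq2 / t1 < t2.
  move=> wl; have [lt|gt|/val_inj eq_t] := ltngtP t1 t2; first exact: (wl t1 t2).
    by apply: (wl t2 t1); rewrite // eq_sym.
  by rewrite eq_t eqxx in t12.
wlog lt_ab : a b ab eq1 eq2 / a < b.
  move=> wl; have [lt|gt|/val_inj eq_ab] := ltngtP a b; first exact: (wl a b).
    by apply: (wl b a); rewrite // eq_sym.
  by rewrite eq_ab eqxx in ab.
exists a, b, (m + t1), (m + t2); split; rewrite ?lt_ab ?ltn_ord ?leq_addr ?ltn_add2l //.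
- by rewrite leq_add2l -ltnS.
- exact/eqP.
- exact/eqP.
Qed.

Lemma count_iota_windows (S : pred nat) M N n :
  (forall m, M <= m -> exists2 t, t <= N & S (m + t)) ->
  n <= count S (iota 1 n) * N.+1 + (M + N).
Proof.
move=> win; elim/ltn_ind: n => n IH.
have [small|large] := leqP n (M + N); first lia.
set n' := n - N.+1.
have -> : iota 1 n = iota 1 n' ++ iota (1 + n') N.+1 by rewrite -iotaD subnK //; lia.
have hit : 0 < count S (iota (1 + n') N.+1).
  have [t le_t St] : exists2 t, t <= N & S (1 + n' + t) by apply: win; lia.
  by rewrite -has_count; apply/hasP; exists (1 + n' + t); rewrite // mem_iota; lia.
have IHn' : n' <= count S (iota 1 n') * N.+1 + (M + N) by apply: IH; lia.
have := leq_mul hit (leqnn N.+1); rewrite count_cat mulnDl; lia.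
Qed.

Section LowerDensity.
Variable R : realType.
Local Open Scope ring_scope.

Lemma lt_limn_inf_frequently (u : R^nat) r : bounded_fun u -> limn_inf u < r ->
  forall n, exists2 m, (n <= m)%N & u m < r.
Proof.
move=> bu lt_r n.
have : infs u n < r.
  apply: le_lt_trans lt_r; rewrite limn_infE //.
  by apply: ub_le_sup; [exact: bounded_fun_has_ubound_infs | exists n].
case/inf_lt => [|_ [m /= le_nm <-] um]; last by exists m.
by exists (u n), n => /=.
Qed.

Lemma limn_inf_ge (u : R^nat) (c K : R) : bounded_fun u ->
  (forall n, c * n.+1%:R - K <= u n * n.+1%:R) -> c <= limn_inf u.
Proof.
move=> bu low; rewrite leNgt; apply/negP => lt_c.
pose r := (limn_inf u + c) / 2.
have r_gt : limn_inf u < r by rewrite /r; lra.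
have r_lt : r < c by rewrite /r; lra.
pose n := Num.bound `|K / (c - r)|.
have n_gt : K < n%:R * (c - r).
  rewrite -ltr_pdivrMr ?subr_gt0 //.
  exact: le_lt_trans (ler_norm _) (archi_boundP (normr_ge0 _)).
have [m le_nm um] := lt_limn_inf_frequently bu r_gt n.
have := low m; have : u m * m.+1%:R < r * m.+1%:R by rewrite ltr_pM2r.
have : n%:R <= m.+1%:R :> R by rewrite ler_nat; lia.
nra.
Qed.

Lemma bounded_density_seq (S : pred nat) : bounded_fun (density_seq R S).
Proof.
rewrite /bounded_near; near=> M => n _ /=.
rewrite ger0_norm ?divr_ge0 //; apply: le_trans (_ : 1 <= M); last first.
  by near: M; exact: nbhs_pinfty_ge.
rewrite ler_pdivrMr ?ltr0n // mul1r ler_nat.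
by apply: leq_trans (count_size _ _) _; rewrite size_iota.
Unshelve. all: end_near. Qed.

Lemma lower_density_gaps (S : pred nat) N : lower_density R S < N.+1%:R^-1 ->
  forall M, exists2 m, (M <= m)%N & forall t, (t <= N)%N -> ~~ S (m + t).
Proof.
move=> lt_d M; apply: contrapT => no_gap; move: lt_d; apply/negP; rewrite -leNgt.
have win m : (M <= m)%N -> exists2 t, (t <= N)%N & S (m + t).
  move=> le_Mm; apply: contrapT => no_t; apply: no_gap; exists m => // t le_t.
  by apply/negP => St; apply: no_t; exists t.
apply: (limn_inf_ge (K := (M + N)%:R / N.+1%:R) (bounded_density_seq S)) => n.
rewrite /density_seq divfK ?pnatr_eq0 // mulrC -mulrBl ler_pdivrMr ?ltr0n //.
by rewrite lerBlDr -natrM -natrD ler_nat count_iota_windows.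
Qed.

End LowerDensity.

Lemma power_factors_of_gaps (A : eqType) (x : nat -> A) k lam N :
  0 < k -> k * k.-1 < N.+1 * (lam * lam.+1) ->
  (forall M, exists2 m, M <= m & forall t, t <= N -> ~~ AP x k lam (m + t)) ->
  forall l, exists u : seq A,
    [/\ 0 < size u, size u <= (k - 1) * N & is_factor (wpow u l) x].
Proof.
move=> k0 hk gaps l; set P := (k - 1) * N.
have [m m_ge gap] := gaps (l * P + P).+1.
have [i [j [m1 [m2 [/andP[ij jk] /andP[m_le m12] m2_le eq1 eq2]]]]] :=
  twice_repeated_block k0 (leq_ltn_trans (leq0n _) m_ge) hk gap.
rewrite -(subnKC (ltnW ij)) -(subnKC (ltnW m12)) in eq1 eq2.
have d0 : 0 < j - i by rewrite subn_gt0.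
have e0 : 0 < m2 - m1 by rewrite subn_gt0.
have le_q : (j - i) * (m2 - m1) <= P by apply: leq_mul; lia.
have le_ie : i * (m2 - m1) <= P by apply: leq_mul; lia.
have long : l * ((j - i) * (m2 - m1)) + i * (m2 - m1) <= m1 + (j - i) * (m2 - m1).
  by have := leq_mul (leqnn l) le_q; lia.
have [u size_u fac] := twice_repeated_block_power d0 e0 eq1 eq2 long.
by exists u; rewrite size_u muln_gt0 d0 e0.
Qed.

Lemma antitone_pigeonhole (T : eqType) (Q : T -> nat -> Prop) (s : seq T) :
  (forall u l l', l' <= l -> Q u l -> Q u l') ->
  (forall l, exists2 u, u \in s & Q u l) -> exists2 u, u \in s & forall l, Q u l.
Proof.
move=> anti; elim: s => [|v s IH] hit; first by have [] := hit 0.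
have [Qv|] := pselect (forall l, Q v l); first by exists v; rewrite ?mem_head.
case/existsNP => l0 nQv; have [u us Qu] : exists2 u, u \in s & forall l, Q u l.
  apply: IH => l; have [u] := hit (maxn l l0).
  rewrite in_cons => /orP[/eqP ->|us] Qu.
    by case: nQv; apply: anti Qu; apply: leq_maxr.
  by exists u => //; apply: anti Qu; apply: leq_maxl.
by exists u; rewrite // in_cons us orbT.
Qed.

Definition short_words (A : finType) (n : nat) : seq (seq A) :=
  flatten [seq [seq val t | t : p.-tuple A] | p <- iota 0 n.+1].

Lemma mem_short_words (A : finType) n (u : seq A) : size u <= n -> u \in short_words A n.
Proof.
move=> le_u; apply/flattenP; exists [seq val t | t : (size u).-tuple A].
  by apply/mapP; exists (size u); rewrite // mem_iota.
by apply/fintype.imageP; exists (in_tuple u).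
Qed.

Theorem corollary3p6 (R : realType) (A : finType) (x : nat -> A) (k lam : nat) :
  0 < k -> 0 < lam ->
  (lower_density R (AP x k lam) <
     ((1 + (k ^ 2 - k) %/ (lam ^ 2 + lam))%:R)^-1)%R ->
  (exists u : seq A,
      [/\ 0 < size u,
          size u <= (k - 1) * ((k ^ 2 - k) %/ (lam ^ 2 + lam)) &
          forall l : nat, 0 < l -> is_factor (wpow u l) x])
  /\ ~ omega_power_free x.
Proof.
move=> k0 lam0; rewrite add1n => /lower_density_gaps gaps.
set N := (k ^ 2 - k) %/ (lam ^ 2 + lam) in gaps *; set P := (k - 1) * N.
have hk : k * k.-1 < N.+1 * (lam * lam.+1).
  rewrite -subn1 mulnBr muln1 mulnS addnC !mulnn.
  by apply: ltn_ceil; rewrite addn_gt0 lam0 orbT.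
pose Q u l := [/\ 0 < size u, size u <= P & is_factor (wpow u l) x].
have [u _ Qu] : exists2 u, u \in short_words A P & forall l, Q u l.
  apply: antitone_pigeonhole => [u l l' le_l [u0 le_u fac]|l].
    by split=> //; apply: is_factor_wpow_le fac.
  have [u [u0 le_u fac]] := power_factors_of_gaps k0 hk gaps l.
  by exists u; rewrite ?mem_short_words.
have [u0 le_u _] := Qu 0.
split; first by exists u; split=> // l _; case: (Qu l).
move=> opf; have [|l [_ not_fac]] := opf u u0.
  by case: (Qu 1) => _ _; rewrite /wpow /= cats0.
by apply: not_fac; case: (Qu l).
Qed.
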